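(* Let $\alpha,\beta,p,n$ be positive integers with $p<\alpha\beta$ and $\beta\mid n$. Let $q=\lceil p/\beta\rceil$ and $r=p \bmod \beta\in\{1,\ldots,\beta\}$. Consider the code on cells $c_1,\ldots,c_n$, starting from the all-zero state, which on the $i$-th write ($i\ge1$) acts as follows: if $1\le i\bmod\alpha<q$, $n$ arbitrary information bits are written into all $n$ cells; if $i\bmod\alpha=q$, $rn/\beta$ arbitrary information bits are written into exactly the cells $c_j$ with $1\le j\bmod\beta\le r$, all other cells being left unchanged; if $i\bmod\alpha>q$, no information is written and no cell changes. Then this code is an $(\alpha,\beta,p)$-constrained code and its rate is $\frac{p}{\alpha\beta}$.
   Context: Convention: for positive integers $x,y$, $x \bmod y$ is taken in $\{1,\ldots,y\}$ (residue $0$ is represented by $y$). Memory cells are binary; there are $n$ cells and cell-state vectors lie in $\{0,1\}^n$. A code on $n$ cells consists, for each write $i\ge 1$, of a real $R_i\ge 0$, an encoder $\mathcal{E}_i:\{1,\ldots,\lfloor 2^{nR_i}\rfloor\}\times\{0,1\}^n\to\{0,1\}^n$ and a decoder $\mathcal{D}_i:\{0,1\}^n\to\{1,\ldots,\lfloor 2^{nR_i}\rfloor\}$ with $\mathcal{D}_i(\mathcal{E}_i(m,\mathbf{u}))=m$ (encoder and decoder may depend on $i$). Starting from $\mathbf{v}_0=\mathbf{0}$, messages $m_1,m_2,\ldots$ produce states $\mathbf{v}_i=\mathcal{E}_i(m_i,\mathbf{v}_{i-1})=(v_{i,1},\ldots,v_{i,n})$. The code is $(\alpha,\beta,p)$-constrained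 if for every message sequence, every $i\ge0$ and every $1\le j\le n-\beta+1$, $|\{(k,\ell): v_{i+k,j+\ell}\ne v_{i+k+1,j+\ell}, 0\le k<\alpha, 0\le\ell<\beta\}|\le p$. Its rate is $\lim_{m\to\infty}\frac1m\sum_{i=1}^m R_i$ (the number of information bits written per cell per write, averaged over writes). *)

From Stdlib Require Import Reals.
From mathcomp Require Import all_boot.

Set Implicit Arguments.
Unset Strict Implicit.
Unset Printing Implicit Defensive.

Definition modp (x y : nat) : nat := if x %% y == 0 then y else x %% y.

(* Cell-state vectors in {0,1}^n; cell c_j (1-indexed) is entry j-1. *)
Definition cstate (n : nat) := n.-tuple bool.
Definition cell (n : nat) (v : cstate n) (j0 : nat) : bool := nth false v j0.
Definition zero_state (n : nat) : cstate n := nseq_tuple n false.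

Definition nmsg (n : nat) (Ri : R) : nat := Z.to_nat (Int_part (Rpower 2 (INR n * Ri))).

(* Messages are natural numbers; only m in {1..nmsg} are meaningful. *)
Record code (n : nat) := Code {
  rate_of : nat -> R;
  enc : nat -> nat -> cstate n -> cstate n;
  dec : nat -> cstate n -> nat;
  rate_nonneg : forall i, 1 <= i -> Rle R0 (rate_of i);
  dec_range : forall i v, 1 <= i -> 1 <= dec i v <= nmsg n (rate_of i);
  dec_correct : forall i m u, 1 <= i -> 1 <= m <= nmsg n (rate_of i) ->
                dec i (enc i m u) = m
}.

Definition valid_msgs n (C : code n) (ms : nat -> nat) : Prop :=
  forall i, 1 <= i -> 1 <= ms i <= nmsg n (rate_of C i).

Fixpoint states n (C : code n) (ms : nat -> nat) (i : nat) : cstate n :=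
  match i with
  | 0 => zero_state n
  | i'.+1 => enc C i'.+1 (ms i'.+1) (states C ms i')
  end.

(* (alpha,beta,p)-constrained: for every message sequence, every i >= 0 and
   every window start j (1-indexed, 1 <= j <= n-beta+1; here j0 = j-1 with
   j0 + beta <= n), at most p of the alpha*beta (write, cell) pairs change. *)
Definition constrained n (C : code n) (alpha beta p : nat) : Prop :=
  forall ms, valid_msgs C ms ->
  forall i j0, j0 + beta <= n ->
    #|[pred kl : 'I_alpha * 'I_beta |
        cell (states C ms (i + kl.1)) (j0 + kl.2)
        != cell (states C ms (i + kl.1).+1) (j0 + kl.2)]| <= p.

Fixpoint rsum (f : nat -> R) (m : nat) : R :=
  match m with
  | 0 => R0
  | m'.+1 => Rplus (rsum f m') (f m'.+1)
  end.

Definition has_rate n (C : code n) (rho : R) : Prop :=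
  Un_cv (fun m => Rdiv (rsum (rate_of C) m) (INR m)) rho.

Definition thm3_q (beta p : nat) : nat := (p + beta - 1) %/ beta.
Definition thm3_r (beta p : nat) : nat := modp p beta.

Definition is_thm3_code n (C : code n) (alpha beta p : nat) : Prop :=
  let q := thm3_q beta p in
  let r := thm3_r beta p in
  forall i, 1 <= i ->
    (modp i alpha < q -> rate_of C i = R1) /\
    (modp i alpha = q ->
       rate_of C i = Rdiv (INR r) (INR beta) /\
       forall m u j0, j0 < n -> r < modp j0.+1 beta ->
         cell (enc C i m u) j0 = cell u j0) /\
    (q < modp i alpha -> rate_of C i = R0 /\ forall m u, enc C i m u = u).

From Stdlib Require Import Reals Lra.
From mathcomp Require Import all_boot zify.

(* A changed (write, cell) pair in an alpha x beta window is determined by the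
   residues of its write index mod alpha and of its cell index mod beta, and
   only the pairs with write residue < q, or = q and cell residue <= r, can
   change; there are (q - 1) beta + r = p of them. Hence the constraint.
   The rate of the i-th write depends only on i mod alpha, so the running
   average of the rates converges to the average over one period,
   ((q - 1) + r / beta) / alpha = p / (alpha beta). *)

Lemma card_le_inj_bound (T : finType) (P : pred T) (g : T -> nat) c :
  {in P &, injective g} -> (forall x, P x -> g x < c) -> #|P| <= c.
Proof.
move=> g_inj g_lt.
rewrite cardE -(size_map g) -(size_iota 0 c).
apply: uniq_leq_size.
  rewrite map_inj_in_uniq ?enum_uniq //.
  by move=> x y; rewrite !mem_enum; apply: g_inj.
move=> z /mapP [x]; rewrite mem_enum => Px ->.
by rewrite mem_iota add0n g_lt.
Qed.

Lemma modnDl_inj a x y d : x < d -> y < d -> (a + x) %% d = (a + y) %% d -> x = y.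
Proof. by move=> ltxd ltyd /eqP; rewrite eqn_modDl !modn_small // => /eqP. Qed.

Lemma modpS x y : 0 < y -> modp x.+1 y = (x %% y).+1.
Proof.
move=> y_gt0; rewrite /modp; have -> : x.+1 %% y = (x %% y).+1 %% y.
  by rewrite {1}(divn_eq x y) -addnS modnMDl.
have := ltn_pmod x y_gt0; rewrite leq_eqVlt => /orP[/eqP ->|lt_xy].
  by rewrite modnn.
by rewrite modn_small.
Qed.

Lemma modp_small x y : 0 < x <= y -> modp x y = x.
Proof.
case/andP=> x_gt0; rewrite leq_eqVlt => /orP[/eqP ->|lt_xy].
  by rewrite /modp modnn eqxx.
by rewrite /modp modn_small // gtn_eqF.
Qed.

Lemma modpDr x y : modp (x + y) y = modp x y.
Proof. by rewrite /modp modnDr. Qed.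

Lemma thm3_qr_spec beta p : 0 < beta -> 0 < p ->
  [/\ 0 < thm3_q beta p, thm3_r beta p <= beta &
      p = (thm3_q beta p).-1 * beta + thm3_r beta p].
Proof.
rewrite /thm3_q /thm3_r /modp => beta_gt0 p_gt0.
have p_eq := divn_eq p beta; have := ltn_pmod p beta_gt0.
move: p_eq; set a := p %/ beta; set b := p %% beta => p_eq lt_b.
case: eqP => [b0|b_neq0].
  have -> : p + beta - 1 = a * beta + beta.-1 by lia.
  rewrite divnMDl // divn_small ?addn0; last by lia.
  by case: a p_eq => [|a'] p_eq /=; [lia|split; lia].
have -> : p + beta - 1 = a.+1 * beta + b.-1 by rewrite mulSn; lia.
by rewrite divnMDl // divn_small ?addn0 /=; [split; lia|lia].
Qed.

Section Thm3Constraint.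

Variables (alpha beta p n : nat) (C : code n).
Hypotheses (alpha_gt0 : 0 < alpha) (beta_gt0 : 0 < beta) (p_gt0 : 0 < p).
Hypothesis thm3C : is_thm3_code C alpha beta p.

Local Notation q := (thm3_q beta p).
Local Notation r := (thm3_r beta p).

Lemma thm3_cell_change i j0 m u : 0 < i -> j0 < n ->
  cell u j0 != cell (enc C i m u) j0 ->
  modp i alpha < q \/ modp i alpha = q /\ modp j0.+1 beta <= r.
Proof.
move=> i_gt0 lt_j0n; have [_ [write_q write_gt]] := thm3C i i_gt0.
case: (ltngtP (modp i alpha) q) => [|gt_iq|eq_iq] changed; first by left.
  by have [_ enc_id] := write_gt gt_iq; rewrite enc_id eqxx in changed.
right; split=> //; rewrite leqNgt; apply/negP => gt_jr.
have [_ keep] := write_q eq_iq.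
by rewrite keep ?eqxx in changed.
Qed.

Lemma thm3_slot_lt x y : y < beta ->
  x.+1 < q \/ x.+1 = q /\ y.+1 <= r -> x * beta + y < p.
Proof.
have [_ _ p_eq] := @thm3_qr_spec beta p beta_gt0 p_gt0.
by move=> lt_yb [lt_xq|[eq_xq le_yr]]; rewrite p_eq; [|rewrite -eq_xq]; nia.
Qed.

Lemma thm3_constrained : constrained C alpha beta p.
Proof.
move=> ms _ i j0 window.
pose slot (kl : 'I_alpha * 'I_beta) :=
  (i + kl.1) %% alpha * beta + (j0 + kl.2) %% beta.
apply: (@card_le_inj_bound _ _ slot).
  move=> [k l] [k' l'] _ _; rewrite /slot /= => eq_slot.
  have eq_l : (j0 + l) %% beta = (j0 + l') %% beta.
    by move: (congr1 (modn^~ beta) eq_slot); rewrite !modnMDl !modn_mod.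
  move: eq_slot; rewrite eq_l => /addIn /eqP; rewrite eqn_pmul2r // => /eqP eq_k.
  by congr (_, _); apply: val_inj; [apply: modnDl_inj eq_k|apply: modnDl_inj eq_l].
move=> [k l] /= changed; apply: thm3_slot_lt; first exact: ltn_pmod.
rewrite -!modpS //; apply: thm3_cell_change changed => //.
by have := ltn_ord l; lia.
Qed.

End Thm3Constraint.

Open Scope R_scope.

Lemma eq_rsum (f g : nat -> R) m :
  (forall i, (0 < i <= m)%N -> f i = g i) -> rsum f m = rsum g m.
Proof.
elim: m => //= m IHm eq_fg.
rewrite IHm ?eq_fg ?leqnn // => i /andP[i_gt0 le_im].
by apply: eq_fg; rewrite i_gt0 ltnW.
Qed.

Lemma rsum_bounds (f : nat -> R) m :
  (forall i, 0 <= f i <= 1) -> 0 <= rsum f m <= INR m.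
Proof.
move=> f01; elim: m => [|m IHm]; first by rewrite /=; lra.
by rewrite [rsum _ _]/= S_INR; have := f01 m.+1; lra.
Qed.

Lemma Rdiv_in_01 x y : 0 < y -> 0 <= x <= y -> 0 <= x / y <= 1.
Proof.
move=> y_pos [x_ge0 le_xy]; have invy_pos := Rinv_0_lt_compat y y_pos.
split; first by apply: Rmult_le_pos; lra.
by apply: (Rmult_le_reg_r y) => //; rewrite /Rdiv Rmult_assoc Rinv_l; lra.
Qed.

Section PeriodicMean.

Variables (f : nat -> R) (a : nat).
Hypotheses (a_gt0 : (0 < a)%N) (f_periodic : forall i, f (i + a)%N = f i).
Hypothesis f01 : forall i, 0 <= f i <= 1.

Lemma rsumD_period m : rsum f (m + a) = rsum f m + rsum f a.
Proof.
elim: m => [|m IHm] /=; first by rewrite add0n; lra.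
by rewrite -addSn f_periodic IHm; lra.
Qed.

Lemma rsum_mean_dev m : Rabs (rsum f m - INR m * (rsum f a / INR a)) <= INR a.
Proof.
have a_pos : 0 < INR a by apply: lt_0_INR; apply/ltP.
set L := rsum f a / INR a.
have aL : INR a * L = rsum f a by rewrite /L; field; lra.
have L01 : 0 <= L <= 1.
  by apply: Rdiv_in_01 => //; exact: rsum_bounds.
(* The deviation is a-periodic in m, so it suffices to bound it on [0, a). *)
rewrite (divn_eq m a); elim: (m %/ a)%N => [|t IHt].
  rewrite mul0n add0n; have lt_ma : (m %% a < a)%N by exact: ltn_pmod.
  have := rsum_bounds f (m %% a) f01.
  have : INR (m %% a) <= INR a by apply: le_INR; apply/leP; lia.
  move=> le_ma bounds; apply: Rabs_le; nra.
have -> : (t.+1 * a + m %% a)%N = (t * a + m %% a + a)%N by rewrite mulSn; lia.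
rewrite rsumD_period plus_INR Rmult_plus_distr_r aL.
by have -> : forall x y z : R, x + z - (y + z) = x - y by move=> *; ring.
Qed.

Lemma mean_periodic_cvg : Un_cv (fun m => rsum f m / INR m) (rsum f a / INR a).
Proof.
have a_pos : 0 < INR a by apply: lt_0_INR; apply/ltP.
move=> eps eps_gt0.
have [N [invN_lt N_gt0]] := archimed_cor1 (eps / INR a) (Rdiv_lt_0_compat _ _ eps_gt0 a_pos).
exists N => m le_Nm; rewrite /R_dist.
have N_pos : 0 < INR N by apply: lt_0_INR.
have le_Nm' : INR N <= INR m by apply: le_INR.
have -> : rsum f m / INR m - rsum f a / INR a
          = (rsum f m - INR m * (rsum f a / INR a)) / INR m by field; lra.
rewrite /Rdiv Rabs_mult Rabs_inv (Rabs_pos_eq (INR m)); last lra.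
apply: (Rle_lt_trans _ (INR a / INR N)).
  apply: (Rle_trans _ (INR a / INR m)).
    by apply: Rmult_le_compat_r; [left; apply: Rinv_0_lt_compat; lra|exact: rsum_mean_dev].
  by apply: Rmult_le_compat_l; [lra|apply: Rinv_le_contravar].
apply: (Rlt_le_trans _ (INR a * (eps / INR a))); first exact: Rmult_lt_compat_l.
by right; field; lra.
Qed.

End PeriodicMean.

Definition step_rate (q : nat) (c : R) (a : nat) : R :=
  if (a < q)%N then 1 else if a == q then c else 0.

Lemma rsum_step_rate_small q c m : (m < q)%N -> rsum (step_rate q c) m = INR m.
Proof.
elim: m => [|m IHm] lt_mq //.
by rewrite [rsum _ _]/= IHm ?S_INR /step_rate ?lt_mq // ltnW.
Qed.

Lemma rsum_step_rate q c m : (0 < q <= m)%N -> rsum (step_rate q c) m = INR q.-1 + c.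
Proof.
elim: m => [|m IHm] /andP[q_gt0]; first by rewrite leqn0 => /eqP q0; rewrite q0 in q_gt0.
rewrite leq_eqVlt => /orP[/eqP eq_qm|le_qm] /=.
  by rewrite -eq_qm /= rsum_step_rate_small ?eq_qm // /step_rate ltnn eqxx.
rewrite IHm ?q_gt0 // /step_rate ltnNge (ltnW le_qm) /= gtn_eqF //; lra.
Qed.

Definition thm3_rate (alpha beta p i : nat) : R :=
  step_rate (thm3_q beta p) (INR (thm3_r beta p) / INR beta) (modp i alpha).

Lemma thm3_rate_periodic alpha beta p i :
  thm3_rate alpha beta p (i + alpha) = thm3_rate alpha beta p i.
Proof. by rewrite /thm3_rate modpDr. Qed.

Lemma thm3_rate_bounds alpha beta p i : (0 < beta)%N -> (0 < p)%N ->
  0 <= thm3_rate alpha beta p i <= 1.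
Proof.
move=> beta_gt0 p_gt0; have [_ le_rb _] := @thm3_qr_spec beta p beta_gt0 p_gt0.
have beta_pos : 0 < INR beta by apply: lt_0_INR; apply/ltP.
have : INR (thm3_r beta p) <= INR beta by apply: le_INR; apply/leP.
have := pos_INR (thm3_r beta p).
rewrite /thm3_rate /step_rate; case: ifP => _; first lra.
by case: ifP => _ r_ge0 r_le; [apply: Rdiv_in_01|]; lra.
Qed.

Lemma rsum_thm3_rate_period alpha beta p :
  (0 < beta)%N -> (0 < p)%N -> (p < alpha * beta)%N ->
  rsum (thm3_rate alpha beta p) alpha = INR p / INR beta.
Proof.
move=> beta_gt0 p_gt0 lt_p_ab; have [q_gt0 _ p_eq] := @thm3_qr_spec beta p beta_gt0 p_gt0.
have beta_pos : 0 < INR beta by apply: lt_0_INR; apply/ltP.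
rewrite (@eq_rsum _ (step_rate (thm3_q beta p) (INR (thm3_r beta p) / INR beta))).
  rewrite rsum_step_rate ?q_gt0 /=; last by move: lt_p_ab; rewrite {1}p_eq; nia.
  by rewrite {3}p_eq plus_INR mult_INR; field; lra.
move=> i le_i; rewrite /thm3_rate modp_small //.
Qed.


Section Thm3Rate.

Variables (alpha beta p n : nat) (C : code n).
Hypotheses (alpha_gt0 : (0 < alpha)%N) (beta_gt0 : (0 < beta)%N) (p_gt0 : (0 < p)%N).
Hypothesis lt_p_ab : (p < alpha * beta)%N.
Hypothesis thm3C : is_thm3_code C alpha beta p.

Lemma thm3_rate_ofE i : (0 < i)%N -> rate_of C i = thm3_rate alpha beta p i.
Proof.
move=> i_gt0; have [write_lt [write_q write_gt]] := thm3C i i_gt0.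
rewrite /thm3_rate /step_rate.
case: (ltngtP (modp i alpha) (thm3_q beta p)) => [lt_iq|gt_iq|eq_iq].
- exact: write_lt.
- by have [-> _] := write_gt gt_iq.
- by have [-> _] := write_q eq_iq.
Qed.

Lemma thm3_has_rate : has_rate C (INR p / (INR alpha * INR beta)).
Proof.
have alpha_pos : 0 < INR alpha by apply: lt_0_INR; apply/ltP.
have beta_pos : 0 < INR beta by apply: lt_0_INR; apply/ltP.
have -> : INR p / (INR alpha * INR beta)
          = rsum (thm3_rate alpha beta p) alpha / INR alpha.
  by rewrite rsum_thm3_rate_period //; field; lra.
apply: (Un_cv_ext (fun m => rsum (thm3_rate alpha beta p) m / INR m)).
  move=> m; congr (_ / _); apply: eq_rsum => i /andP[i_gt0 _].
  by rewrite thm3_rate_ofE.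
by apply: mean_periodic_cvg => // i; [exact: thm3_rate_periodic|exact: thm3_rate_bounds].
Qed.

End Thm3Rate.

Close Scope R_scope.

Theorem theorem3 (alpha beta p n : nat) (C : code n) :
  0 < alpha -> 0 < beta -> 0 < p -> 0 < n ->
  p < alpha * beta -> beta %| n ->
  is_thm3_code C alpha beta p ->
  constrained C alpha beta p /\
  has_rate C (Rdiv (INR p) (Rmult (INR alpha) (INR beta))).
Proof.
move=> alpha_gt0 beta_gt0 p_gt0 _ lt_p_ab _ thm3C; split.
  exact: thm3_constrained.
exact: thm3_has_rate.
Qed.
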